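(* Let $n\ge0$ be an integer, $\omega\in\mathbb{R}$ and $\theta_0\in\mathbb{T}$, and write $\theta_j=\theta_0+j\omega$. Suppose that for each $0\le k\le n$ we are given $\Sigma_k\subset\mathbb{T}$ such that $(\Sigma_k,\theta_0)$ is an $(r_k,l_k,a_k)$-system. Then for every integer $t>0$, $$\frac{|\{0\le j<t:\theta_j\in\bigcup_{k=0}^n\Sigma_k\}|}{t}\le\sum_{k=0}^n\Big(\frac{l_k}{t}+\frac{l_k}{r_k+l_k}\Big)$$ and $$\frac{|\{0\le j<t:\theta_j\in\bigcup_{k=0}^n\Sigma_k\}|}{t}\le\sum_{k=0}^n\frac{l_k}{m_k+l_k},\qquad m_k=\min\{a_k,r_k\}.$$
   Context: Fix $\Sigma\subset\mathbb{T}$ and the orbit $\theta_j=\theta_0+j\omega$, $j\in\mathbb{Z}$. The set $\Sigma$ has minimal return time $r>0$ if whenever an orbit leaves $\Sigma$ it does not return for at least $r$ iterates, i.e. every maximal block of consecutive iterates outside $\Sigma$ lying between two visits to $\Sigma$ has length at least $r$. It has maximal confinement time $l>0$ if every block of consecutive iterates $\theta_i,\theta_{i+1},\dots$ all lying in $\Sigma$ has length at most $l$. The point $\theta_0$ has accumulation time $a\ge0$ with respect to $\Sigma$ if $\theta_i\notin\Sigma$ for all $0\le i<a$. If these hold, $(\Sigma,\theta_0)$ is called an $(r,l,a)$-system. *)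

From Stdlib Require Import Reals ZArith Arith Lia ClassicalEpsilon.
Open Scope R_scope.

(* The torus T = R/Z is represented by the fundamental domain [0,1):
   tproj x is the representative of x mod 1 in [0,1). A subset of T is a
   predicate on R (only its values on [0,1) matter). *)
Definition tproj (x : R) : R := x - IZR (Int_part x).

Definition orbit (theta0 omega : R) (j : Z) : R := tproj (theta0 + IZR j * omega).

Definition in_orb (Sigma : R -> Prop) (theta0 omega : R) (j : Z) : Prop :=
  Sigma (orbit theta0 omega j).

Definition min_return_time (Sigma : R -> Prop) (theta0 omega : R) (r : nat) : Prop :=
  forall i k : Z, (i + 1 < k)%Z ->
    in_orb Sigma theta0 omega i -> in_orb Sigma theta0 omega k ->
    (forall m : Z, (i < m < k)%Z -> ~ in_orb Sigma theta0 omega m) ->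
    (Z.of_nat r <= k - i - 1)%Z.

Definition max_confinement_time (Sigma : R -> Prop) (theta0 omega : R) (l : nat) : Prop :=
  forall (i : Z) (len : nat),
    (forall m : Z, (i <= m < i + Z.of_nat len)%Z -> in_orb Sigma theta0 omega m) ->
    (len <= l)%nat.

Definition accumulation_time (Sigma : R -> Prop) (theta0 omega : R) (a : nat) : Prop :=
  forall i : nat, (i < a)%nat -> ~ in_orb Sigma theta0 omega (Z.of_nat i).

Definition rla_system (Sigma : R -> Prop) (theta0 omega : R) (r l a : nat) : Prop :=
  (0 < r)%nat /\ (0 < l)%nat /\
  min_return_time Sigma theta0 omega r /\
  max_confinement_time Sigma theta0 omega l /\
  accumulation_time Sigma theta0 omega a.

Fixpoint count_union (n : nat) (Sigma : nat -> R -> Prop) (theta0 omega : R) (t : nat) : nat :=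
  match t with
  | O => O
  | S t' => (count_union n Sigma theta0 omega t' +
            (if excluded_middle_informative
                  (exists k : nat, (k <= n)%nat /\ in_orb (Sigma k) theta0 omega (Z.of_nat t'))
             then 1 else 0))%nat
  end.

(* Cut the visits to Sigma_k before time t into maximal runs.  A run has
   length s <= l_k and, unless it is the first, follows a gap of length
   g >= r_k, so (l_k + m) s <= l_k (g + s) for every m <= r_k: the visits fill
   at most the fraction l_k / (m + l_k) of each gap-plus-run block.  Only the
   first gap can be short; it is at least a_k, which gives the bound with
   m = min(a_k, r_k), or else it costs an additive error of at most l_k, the
   l_k / t term.  The union is then bounded by the sum over k. *)

From Stdlib Require Import Reals ZArith Arith Lia Lra ClassicalEpsilon.
Open Scope R_scope.

Definition indicator (P : nat -> Prop) (j : nat) : nat :=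
  if excluded_middle_informative (P j) then 1%nat else 0%nat.

Fixpoint count_below (P : nat -> Prop) (t : nat) : nat :=
  match t with
  | O => O
  | S t' => (count_below P t' + indicator P t')%nat
  end.

Fixpoint streak (P : nat -> Prop) (t : nat) : nat :=
  match t with
  | O => O
  | S t' => if excluded_middle_informative (P t') then S (streak P t') else O
  end.

Lemma streak_le P t : (streak P t <= t)%nat.
Proof.
  induction t as [|t IH]; simpl; [lia|].
  destruct excluded_middle_informative; lia.
Qed.

Lemma streak_holds P t j : (t - streak P t <= j < t)%nat -> P j.
Proof.
  revert j; induction t as [|t IH]; simpl; intros j Hj; [lia|].
  destruct excluded_middle_informative as [Pt|_]; [|lia].
  destruct (Nat.eq_dec j t) as [->|]; [exact Pt|].
  apply IH; lia.
Qed.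

Lemma streak_maximal P t :
  (0 < t - streak P t)%nat -> ~ P (t - streak P t - 1)%nat.
Proof.
  induction t as [|t IH]; simpl; intros Ht; [lia|].
  destruct excluded_middle_informative as [Pt|nPt].
  - replace (t - streak P t - 1)%nat with (S t - S (streak P t) - 1)%nat in IH by lia.
    apply IH; lia.
  - match goal with |- ~ P ?x => replace x with t by lia end; exact nPt.
Qed.

Lemma streak_pos P t : (0 < t)%nat -> P (t - 1)%nat -> (1 <= streak P t)%nat.
Proof.
  destruct t as [|t]; simpl; intros Ht Pt; [lia|].
  rewrite Nat.sub_0_r in Pt; destruct excluded_middle_informative; [lia | contradiction].
Qed.

Lemma count_below_block_in P u d :
  (forall j, (u <= j < u + d)%nat -> P j) ->
  count_below P (u + d) = (count_below P u + d)%nat.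
Proof.
  induction d as [|d IH]; intros Hin; [now rewrite !Nat.add_0_r|].
  rewrite Nat.add_succ_r; simpl; rewrite IH by (intros; apply Hin; lia).
  unfold indicator; destruct excluded_middle_informative as [_|nP]; [lia|].
  exfalso; apply nP, Hin; lia.
Qed.

Lemma count_below_block_out P u d :
  (forall j, (u <= j < u + d)%nat -> ~ P j) ->
  count_below P (u + d) = count_below P u.
Proof.
  induction d as [|d IH]; intros Hout; [now rewrite Nat.add_0_r|].
  rewrite Nat.add_succ_r; simpl; rewrite IH by (intros; apply Hout; lia).
  unfold indicator; destruct excluded_middle_informative as [Pj|_]; [|lia].
  exfalso; apply (Hout (u + d)%nat); [lia | exact Pj].
Qed.

Section RunsAndGaps.

Variables (P : nat -> Prop) (l m r K : nat).

Hypothesis confinement :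
  forall i len, (forall j, (i <= j < i + len)%nat -> P j) -> (len <= l)%nat.
Hypothesis return_time :
  forall i k, (i + 1 < k)%nat -> P i -> P k ->
    (forall j, (i < j < k)%nat -> ~ P j) -> (r <= k - i - 1)%nat.
Hypothesis m_le_r : (m <= r)%nat.
(* The slack K pays for a first gap [0, u) shorter than m. *)
Hypothesis first_visit :
  forall u, P u -> (forall j, (j < u)%nat -> ~ P j) -> (l * m <= K + l * u)%nat.

(* Strong induction, peeling off the last run [u, t) and the gap [v, u)
   before it. *)
Lemma count_below_bound t : ((l + m) * count_below P t <= l * t + K)%nat.
Proof.
  induction t as [t IH] using lt_wf_ind.
  destruct t as [|t]; [simpl; lia|].
  destruct (excluded_middle_informative (P t)) as [Pt|nPt].
  2: { specialize (IH t (Nat.lt_succ_diag_r t)); simpl; unfold indicator.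
       destruct excluded_middle_informative; [contradiction | lia]. }
  set (s := streak P (S t)).
  set (u := (S t - s)%nat).
  set (g := streak (fun j => ~ P j) u).
  set (v := (u - g)%nat).
  assert (Hs1 : (1 <= s)%nat) by (apply streak_pos; [lia | now rewrite Nat.sub_succ, Nat.sub_0_r]).
  assert (Ht : S t = (u + s)%nat) by (pose proof (streak_le P (S t)); unfold u, s in *; lia).
  assert (Hu : u = (v + g)%nat) by (pose proof (streak_le (fun j => ~ P j) u); unfold v, g in *; lia).
  assert (Hrun : forall j, (u <= j < u + s)%nat -> P j).
  { intros j Hj; apply (streak_holds P (S t)); fold s u; lia. }
  assert (Hgap : forall j, (v <= j < v + g)%nat -> ~ P j).
  { intros j Hj; apply (streak_holds (fun j => ~ P j) u); fold g v; lia. }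
  assert (Hsl : (s <= l)%nat) by exact (confinement u s Hrun).
  assert (Pu : P u) by (apply Hrun; lia).
  assert (Hcount : count_below P (S t) = (count_below P v + s)%nat).
  { rewrite Ht, count_below_block_in by exact Hrun.
    rewrite Hu, count_below_block_out by exact Hgap; reflexivity. }
  rewrite Hcount.
  destruct (Nat.eq_dec v 0) as [Hv0|Hv0].
  - assert (Hfirst := first_visit u Pu ltac:(intros j Hj; apply Hgap; lia)).
    rewrite Hv0; simpl count_below.
    assert (m * s <= l * m)%nat by nia.
    nia.
  - assert (Hg1 : (1 <= g)%nat).
    { apply streak_pos; [lia|].
      apply (streak_maximal P (S t)); fold s u; lia. }
    assert (Pv1 : P (v - 1)%nat).
    { destruct (excluded_middle_informative (P (v - 1))) as [Pv1|nPv1]; [exact Pv1|].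
      exfalso; apply (streak_maximal (fun j => ~ P j) u); fold g v; [lia | exact nPv1]. }
    assert (Hgr : (r <= g)%nat).
    { replace g with (u - (v - 1) - 1)%nat by lia.
      apply return_time; [lia | exact Pv1 | exact Pu |].
      intros j Hj; apply Hgap; lia. }
    specialize (IH v ltac:(lia)).
    assert (m * s <= l * g)%nat by nia.
    nia.
Qed.

End RunsAndGaps.

Definition visits (Sigma : R -> Prop) (theta0 omega : R) (j : nat) : Prop :=
  in_orb Sigma theta0 omega (Z.of_nat j).

Section RlaSystem.

Variables (Sigma : R -> Prop) (theta0 omega : R) (r l a : nat).
Hypothesis Hsys : rla_system Sigma theta0 omega r l a.

Lemma rla_confinement i len :
  (forall j, (i <= j < i + len)%nat -> visits Sigma theta0 omega j) -> (len <= l)%nat.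
Proof.
  destruct Hsys as (_ & _ & _ & Hconf & _); intros Hin.
  apply (Hconf (Z.of_nat i)); intros z Hz.
  replace z with (Z.of_nat (Z.to_nat z)) by lia; apply Hin; lia.
Qed.

Lemma rla_return_time i k :
  (i + 1 < k)%nat -> visits Sigma theta0 omega i -> visits Sigma theta0 omega k ->
  (forall j, (i < j < k)%nat -> ~ visits Sigma theta0 omega j) -> (r <= k - i - 1)%nat.
Proof.
  destruct Hsys as (_ & _ & Hret & _ & _); intros Hik Vi Vk Hout.
  enough (Z.of_nat r <= Z.of_nat k - Z.of_nat i - 1)%Z by lia.
  apply Hret; [lia | exact Vi | exact Vk |].
  intros z Hz; replace z with (Z.of_nat (Z.to_nat z)) by lia; apply Hout; lia.
Qed.

Lemma rla_accumulation_time j : visits Sigma theta0 omega j -> (a <= j)%nat.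
Proof.
  destruct Hsys as (_ & _ & _ & _ & Hacc); intros Vj.
  destruct (Nat.lt_ge_cases j a) as [Hja|]; [exfalso; exact (Hacc j Hja Vj) | assumption].
Qed.

Lemma rla_count_le_return t :
  ((l + r) * count_below (visits Sigma theta0 omega) t <= l * t + r * l)%nat.
Proof.
  apply count_below_bound with (r := r);
    [exact rla_confinement | exact rla_return_time | lia | intros; nia].
Qed.

Lemma rla_count_le_min t :
  ((l + Nat.min a r) * count_below (visits Sigma theta0 omega) t <= l * t)%nat.
Proof.
  rewrite <- (Nat.add_0_r (l * t)); apply count_below_bound with (r := r);
    [exact rla_confinement | exact rla_return_time | lia |].
  intros u Vu _; pose proof (rla_accumulation_time u Vu); nia.
Qed.

End RlaSystem.

Lemma sum_f_R0_ge_term (f : nat -> R) n k :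
  (forall i, 0 <= f i) -> (k <= n)%nat -> f k <= sum_f_R0 f n.
Proof.
  intros Hf; induction n as [|n IH]; intros Hk.
  - replace k with 0%nat by lia; simpl; lra.
  - simpl; destruct (Nat.eq_dec k (S n)) as [->|Hne].
    + pose proof (cond_pos_sum f n Hf); lra.
    + pose proof (IH ltac:(lia)); pose proof (Hf (S n)); lra.
Qed.

Lemma indicator_exists_le_sum (Q : nat -> nat -> Prop) n j :
  INR (indicator (fun j => exists k, (k <= n)%nat /\ Q k j) j)
    <= sum_f_R0 (fun k => INR (indicator (Q k) j)) n.
Proof.
  unfold indicator at 1; destruct excluded_middle_informative as [[k [Hk Qk]]|_].
  - eapply Rle_trans; [|apply (sum_f_R0_ge_term _ n k); [intros; apply pos_INR | exact Hk]].
    unfold indicator; destruct excluded_middle_informative; [lra | contradiction].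
  - apply cond_pos_sum; intros; apply pos_INR.
Qed.

Lemma count_below_exists_le_sum (Q : nat -> nat -> Prop) n t :
  INR (count_below (fun j => exists k, (k <= n)%nat /\ Q k j) t)
    <= sum_f_R0 (fun k => INR (count_below (Q k) t)) n.
Proof.
  induction t as [|t IH]; simpl count_below.
  - apply cond_pos_sum; intros; apply pos_INR.
  - rewrite plus_INR, (sum_eq _ (fun k => INR (count_below (Q k) t) + INR (indicator (Q k) t)))
      by (intros; apply plus_INR).
    rewrite sum_plus; pose proof (indicator_exists_le_sum Q n t); lra.
Qed.

Lemma count_union_eq n Sigma theta0 omega t :
  count_union n Sigma theta0 omega t
  = count_below (fun j => exists k, (k <= n)%nat /\ visits (Sigma k) theta0 omega j) t.
Proof. induction t as [|t IH]; simpl; [reflexivity | now rewrite IH]. Qed.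

Lemma sum_f_R0_div (f : nat -> R) c n :
  sum_f_R0 (fun k => f k / c) n = sum_f_R0 f n / c.
Proof. induction n as [|n IH]; simpl; [reflexivity | rewrite IH; unfold Rdiv; ring]. Qed.

Lemma ratio_le_of_count_le_return (c t l r : R) :
  0 < t -> 0 < l -> 0 <= r -> (l + r) * c <= l * t + r * l ->
  c / t <= l / t + l / (r + l).
Proof.
  intros Ht Hl Hr H.
  assert (E : l / t + l / (r + l) - c / t
              = (l * (r + l) + l * t - (r + l) * c) / (t * (r + l))) by (field; lra).
  enough (0 <= (l * (r + l) + l * t - (r + l) * c) / (t * (r + l))) by lra.
  unfold Rdiv; apply Rmult_le_pos; [nra | left; apply Rinv_0_lt_compat; nra].
Qed.

Lemma ratio_le_of_count_le_min (c t l m : R) :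
  0 < t -> 0 < l -> 0 <= m -> (l + m) * c <= l * t ->
  c / t <= l / (m + l).
Proof.
  intros Ht Hl Hm H.
  assert (E : l / (m + l) - c / t = (l * t - (m + l) * c) / (t * (m + l))) by (field; lra).
  enough (0 <= (l * t - (m + l) * c) / (t * (m + l))) by lra.
  unfold Rdiv; apply Rmult_le_pos; [nra | left; apply Rinv_0_lt_compat; nra].
Qed.

Theorem lemmaB1 (n : nat) (omega theta0 : R) (Sigma : nat -> R -> Prop)
  (r l a : nat -> nat)
  (Hsys : forall k : nat, (k <= n)%nat -> rla_system (Sigma k) theta0 omega (r k) (l k) (a k)) :
  forall t : nat, (0 < t)%nat ->
    INR (count_union n Sigma theta0 omega t) / INR t
      <= sum_f_R0 (fun k => INR (l k) / INR t + INR (l k) / INR (r k + l k)) n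
    /\
    INR (count_union n Sigma theta0 omega t) / INR t
      <= sum_f_R0 (fun k => INR (l k) / INR (Nat.min (a k) (r k) + l k)) n.
Proof.
  intros t Ht.
  assert (Ht' : 0 < INR t) by (apply lt_0_INR; lia).
  set (c k := INR (count_below (visits (Sigma k) theta0 omega) t)).
  assert (Hunion : INR (count_union n Sigma theta0 omega t) / INR t
                   <= sum_f_R0 (fun k => c k / INR t) n).
  { rewrite sum_f_R0_div, count_union_eq.
    apply Rmult_le_compat_r; [left; apply Rinv_0_lt_compat, Ht'|].
    apply count_below_exists_le_sum. }
  split; eapply Rle_trans; try exact Hunion; apply sum_Rle; intros k Hk;
    destruct (Hsys k Hk) as (_ & Hl & _); rewrite plus_INR.
  - apply ratio_le_of_count_le_return; [exact Ht' | apply lt_0_INR, Hl | apply pos_INR |].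
    unfold c; rewrite <- !plus_INR, <- !mult_INR, <- plus_INR.
    apply le_INR, (rla_count_le_return _ _ _ _ _ _ (Hsys k Hk)).
  - apply ratio_le_of_count_le_min; [exact Ht' | apply lt_0_INR, Hl | apply pos_INR |].
    unfold c; rewrite <- !plus_INR, <- !mult_INR.
    apply le_INR, (rla_count_le_min _ _ _ _ _ _ (Hsys k Hk)).
Qed.
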